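(* Let $\Omega\subset\mathbb{Z}^2$ be finite, let $u:\Omega\to\{0,1\}$ be a binary image with foreground $\mathbb{X}=\{y\in\Omega:u(y)=1\}$ and background $\mathbb{X}^c=\Omega\setminus\mathbb{X}$, and let $x\in\Omega$ be a point all of whose eight neighbors lie in $\Omega$. Then $x$ is a simple point if and only if $\mathcal{C}(u_m)[x]=2$.
   Context: Neighborhoods: for $x=(x_1,x_2)$, $\mathbb{N}_4(x)=\{x'\in\Omega:|x_1-x_1'|+|x_2-x_2'|\le1\}$, $\mathbb{N}_8(x)=\{x'\in\Omega:\max(|x_1-x_1'|,|x_2-x_2'|)\le1\}$, $\mathring{\mathbb{N}}_n(x)=\mathbb{N}_n(x)\setminus\{x\}$. Foreground is 8-connected, background 4-connected. Geodesic neighborhoods w.r.t. $\mathbb{Y}\subset\Omega$: $\mathbb{N}^1_n(x,\mathbb{Y})=\mathring{\mathbb{N}}_n(x)\cap\mathbb{Y}$, $\mathbb{N}^k_n(x,\mathbb{Y})=\bigcup\{\mathbb{N}_n(y)\cap\mathring{\mathbb{N}}_8(x)\cap\mathbb{Y}:y\in\mathbb{N}^{k-1}_n(x,\mathbb{Y})\}$ for $k\ge2$. $T_4(x,\mathbb{Y})$ = number of 4-connected components of $\mathbb{N}^2_4(x,\mathbb{Y})$; $T_8(x,\mathbb{Y})$ = number of 8-connected components of $\mathbb{N}^1_8(x,\mathbb{Y})$. $x$ is a simple point iff $T_4(x,\mathbb{X}^c)=1$ and $T_8(x,\mathbb{X})=1$. Cyclic neighborhood: label the eight neighbors of $x$ as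 $x_1$ (top-left), $x_2$ (top), $x_3$ (top-right), $x_4$ (right), $x_5$ (bottom-right), $x_6$ (bottom), $x_7$ (bottom-left), $x_8$ (left), and set $x_9=x_1$. For a binary function $f$ on these neighbors, the crossing number is $\mathcal{C}(f)[x]=\sum_{i=1}^8\delta(|f(x_{i+1})-f(x_i)|)$ with $\delta(1)=1,\delta(0)=0$, i.e. the number of value changes $0\to1$ or $1\to0$ going once around the cycle. Define $m$ on $\mathring{\mathbb{N}}_8(x)$ by $m(y)=1$ if $y\in\mathbb{N}^2_4(x,\mathbb{X}^c)$ and $m(y)=0$ otherwise, and $u_m(y)=1-m(y)(1-u(y))$ (so $u_m(y)=0$ exactly when $y\in\mathbb{N}^2_4(x,\mathbb{X}^c)$). *)

From HB Require Import structures.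
From mathcomp Require Import all_boot all_order all_algebra.
From mathcomp Require Import finmap.
Set Implicit Arguments. Unset Strict Implicit. Unset Printing Implicit Defensive.
Import Order.TTheory GRing.Theory Num.Theory.
Local Open Scope fset_scope.

Definition pt := (int * int)%type.

Definition d4 (x y : pt) : nat := (`|x.1 - y.1|%N + `|x.2 - y.2|%N)%N.
Definition d8 (x y : pt) : nat := maxn `|x.1 - y.1|%N `|x.2 - y.2|%N.

Definition N4 (Omega : {fset pt}) (x : pt) : {fset pt} :=
  [fset y in Omega | d4 x y <= 1]%N.
Definition N8 (Omega : {fset pt}) (x : pt) : {fset pt} :=
  [fset y in Omega | d8 x y <= 1]%N.
Definition N4o (Omega : {fset pt}) (x : pt) : {fset pt} := N4 Omega x `\ x.
Definition N8o (Omega : {fset pt}) (x : pt) : {fset pt} := N8 Omega x `\ x.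

Definition Nn (four : bool) Omega x := if four then N4 Omega x else N8 Omega x.
Definition Nno (four : bool) Omega x := if four then N4o Omega x else N8o Omega x.

(* Geodesic neighborhoods N^k_n(x, Y), for k >= 1 (geo four Omega x Y k.-1 = N^k). *)
Fixpoint geo (four : bool) (Omega : {fset pt}) (x : pt) (Y : {fset pt}) (k : nat)
  : {fset pt} :=
  match k with
  | 0 => Nno four Omega x `&` Y
  | k'.+1 => \bigcup_(y <- geo four Omega x Y k')
               (Nn four Omega y `&` N8o Omega x `&` Y)
  end.

Definition Ngeo (four : bool) Omega x Y (k : nat) := geo four Omega x Y k.-1.

Definition adj4 (y z : pt) : bool := d4 y z == 1%N.
Definition adj8 (y z : pt) : bool := (y != z) && (d8 y z <= 1)%N.

Definition ncomp (e : rel pt) (S : {fset pt}) : nat :=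
  n_comp (fun a b : S => e (val a) (val b)) predT.

Definition T4 Omega x Y := ncomp adj4 (Ngeo true Omega x Y 2).
Definition T8 Omega x Y := ncomp adj8 (Ngeo false Omega x Y 1).

Definition fg (Omega : {fset pt}) (u : pt -> bool) : {fset pt} := [fset y in Omega | u y].
Definition bg (Omega : {fset pt}) (u : pt -> bool) : {fset pt} := Omega `\` fg Omega u.

Definition simple_point Omega u x : Prop :=
  T4 Omega x (bg Omega u) = 1%N /\ T8 Omega x (fg Omega u) = 1%N.

(* Cyclic neighborhood: x_1 top-left, x_2 top, x_3 top-right, x_4 right,
   x_5 bottom-right, x_6 bottom, x_7 bottom-left, x_8 left, x_9 = x_1.
   Convention: x = (column, row), rows growing downwards ("top" = row - 1).
   cyc x i is x_{i+1} (0-indexed, taken mod 8). *)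
Definition cyc_off (i : nat) : int * int :=
  match (i %% 8)%N with
  | 0 => (-1, -1) | 1 => (0, -1) | 2 => (1, -1) | 3 => (1, 0)
  | 4 => (1, 1) | 5 => (0, 1) | 6 => (-1, 1) | _ => (-1, 0)
  end%R.
Definition cyc (x : pt) (i : nat) : pt :=
  ((x.1 + (cyc_off i).1)%R, (x.2 + (cyc_off i).2)%R).

(* delta on {0,1}, extended by delta(n) = (n != 0) *)
Definition delta (n : nat) : nat := (n != 0%N).

Definition crossing (f : pt -> nat) (x : pt) : nat :=
  \sum_(i < 8) delta `|(Posz (f (cyc x i.+1)) - Posz (f (cyc x i)))%R|%N.

Definition mfun Omega u x (y : pt) : nat := (y \in Ngeo true Omega x (bg Omega u) 2).
Definition um Omega u x (y : pt) : nat := (1 - mfun Omega u x y * (1 - u y))%N.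

From HB Require Import structures.
From mathcomp Require Import all_boot all_order all_algebra.
From mathcomp Require Import finmap.

Set Implicit Arguments. Unset Strict Implicit. Unset Printing Implicit Defensive.
Import GRing.Theory.
Local Open Scope fset_scope.

(* Everything in the statement only sees the eight neighbours x_1, ..., x_8 of
   x, through translation-invariant distances.  Indexing x_(i+1) by i : 'I_8,
   the 4-neighbours of x are the odd indices, 4-adjacency between neighbours is
   adjacency on the 8-cycle, N^1_8(x, X) is the set of foreground indices and
   N^2_4(x, X^c) the set of background indices that are odd or next to a
   background odd index.  T4, T8 and the crossing number of u_m thus become
   functions of a colouring of the 8-cycle, and the equivalence is checked on
   all 2^8 colourings. *)

Lemma ncomp_inj_image (I : finType) (e : rel pt) (S : {fset pt}) (f : I -> pt)
    (Q : pred I) (e' : rel I) :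
  injective f -> symmetric e ->
  (forall z, (z \in S) = [exists i, (z == f i) && Q i]) ->
  e' =2 (fun i j => [&& Q i, Q j & e (f i) (f j)]) ->
  ncomp e S = n_comp e' Q.
Proof.
move=> f_inj e_sym S_img e'E.
pose eS (a b : S) := e (val a) (val b).
have S_ex (z : S) : exists i, (val z == f i) && Q i by apply/existsP; rewrite -S_img (valP z).
pose h (z : S) : I := xchoose (S_ex z).
have /all_and2 [hE hQ] (z : S) : f (h z) = val z /\ Q (h z).
  by case/andP: (xchooseP (S_ex z)) => /eqP <-.
have eS_sym : connect_sym eS by apply: sym_connect_sym => a b; rewrite /eS e_sym.
have e'_sym : connect_sym e'.
  by apply: sym_connect_sym => i j; rewrite !e'E /= e_sym andbCA.
have Q_closed : closed e' Q by move=> i j; rewrite e'E !unfold_in => /and3P[-> ->].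
have h_inj : injective h by move=> a b hab; apply: val_inj; rewrite -!hE hab.
have Q_sub : Q \subset codom h.
  apply/subsetP => i Qi.
  have fiS : f i \in S by rewrite S_img; apply/existsP; exists i; rewrite eqxx.
  by apply/codomP; exists [` fiS]; apply: f_inj; rewrite hE.
have h_base : rel_base h e' eS [predC Q].
  by move=> a b _; rewrite e'E /eS -!hE (hQ a) (hQ b).
rewrite (adjunction_n_comp h e'_sym eS_sym Q_closed).
  by apply: eq_n_comp_r => z; rewrite !inE [_ \in Q]hQ.
exact: strict_adjunction.
Qed.

(* Unlike [roots], this form runs the depth-first search once per vertex. *)
Lemma n_comp_dfs (T : finType) (e : rel T) (a : {pred T}) :
  n_comp e a = count (fun x => (x \in a) &&
    (let reach := dfs (rgraph e) #|T| [::] x in odflt x [pick y in reach] == x)) (enum T).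
Proof.
rewrite enumT /n_comp_mem cardE /enum_mem size_filter.
by apply: eq_count => y; rewrite !inE andbC.
Qed.

(* [enum 'I_8] goes through [insub], hence through the opaque [idP], and does
   not evaluate; [ord8] is the same enumeration written out. *)
Definition ord8 : seq 'I_8 :=
  [:: @Ordinal 8 0 isT; @Ordinal 8 1 isT; @Ordinal 8 2 isT; @Ordinal 8 3 isT;
      @Ordinal 8 4 isT; @Ordinal 8 5 isT; @Ordinal 8 6 isT; @Ordinal 8 7 isT].

Lemma enum_ord8 : Finite.enum 'I_8 = ord8.
Proof. by apply: (inj_map val_inj); rewrite -enumT val_enum_ord. Qed.

Lemma index_enum_ord8 : index_enum 'I_8 = ord8.
Proof. by rewrite /index_enum unlock enum_ord8. Qed.

Definition origin : pt := (0, 0)%R.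
Definition shift (x a : pt) : pt := ((x.1 + a.1)%R, (x.2 + a.2)%R).

Lemma shift_origin x : shift x origin = x.
Proof. by rewrite /shift !addr0 -surjective_pairing. Qed.

Lemma shift_inj x : injective (shift x).
Proof. by move=> [a1 a2] [b1 b2] [/addrI -> /addrI ->]. Qed.

Lemma shift_eq x a : (shift x a == x) = (a == origin).
Proof. by rewrite -[X in _ == X](shift_origin x) (inj_eq (@shift_inj x)). Qed.

Lemma d4_shift x a b : d4 (shift x a) (shift x b) = d4 a b.
Proof. by rewrite /d4 /= [(x.1 + a.1)%R]addrC [(x.2 + a.2)%R]addrC !addrKA. Qed.

Lemma d8_shift x a b : d8 (shift x a) (shift x b) = d8 a b.
Proof. by rewrite /d8 /= [(x.1 + a.1)%R]addrC [(x.2 + a.2)%R]addrC !addrKA. Qed.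

Lemma d4_shiftr x b : d4 x (shift x b) = d4 origin b.
Proof. by rewrite -{1}(shift_origin x) d4_shift. Qed.

Lemma d8_shiftr x b : d8 x (shift x b) = d8 origin b.
Proof. by rewrite -{1}(shift_origin x) d8_shift. Qed.

Lemma adj4_shift x a b : adj4 (shift x a) (shift x b) = adj4 a b.
Proof. by rewrite /adj4 d4_shift. Qed.

Lemma adj8_shift x a b : adj8 (shift x a) (shift x b) = adj8 a b.
Proof. by rewrite /adj8 d8_shift (inj_eq (@shift_inj x)). Qed.

Lemma d8_le_d4 y z : (d8 y z <= d4 y z)%N.
Proof. by rewrite geq_max leq_addr leq_addl. Qed.

Lemma adj4_sym : symmetric adj4.
Proof. by move=> y z; rewrite /adj4 /d4 distnC [in X in (_ + X)%N]distnC. Qed.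

Lemma adj8_sym : symmetric adj8.
Proof. by move=> y z; rewrite /adj8 /d8 eq_sym distnC [in X in maxn _ X]distnC. Qed.

Definition cyc_adj4 (i j : 'I_8) : bool := (ordS i == j) || (ordS j == i).
Definition cyc_adj8 (i j : 'I_8) : bool :=
  cyc_adj4 i j || [&& odd i, odd j & (ordS (ordS i) == j) || (ordS (ordS j) == i)].

Lemma odd_ordS (i : 'I_8) : odd (ordS i) = ~~ odd i.
Proof. by case: i => [[|[|[|[|[|[|[|[|//]]]]]]]] ?]. Qed.

Lemma odd_ord_pred (i : 'I_8) : odd (ord_pred i) = ~~ odd i.
Proof. by case: i => [[|[|[|[|[|[|[|[|//]]]]]]]] ?]. Qed.

Lemma cyc_off_neq0 (i : 'I_8) : (cyc_off i == origin) = false.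
Proof. by case: i => [[|[|[|[|[|[|[|[|//]]]]]]]] ?]. Qed.

Lemma d8_origin_cyc_off (i : 'I_8) : (d8 origin (cyc_off i) <= 1)%N.
Proof. by case: i => [[|[|[|[|[|[|[|[|//]]]]]]]] ?]. Qed.

Lemma d4_origin_cyc_off (i : 'I_8) : (d4 origin (cyc_off i) <= 1)%N = odd i.
Proof. by case: i => [[|[|[|[|[|[|[|[|//]]]]]]]] ?]. Qed.

Lemma d4_cyc_off (i j : 'I_8) :
  (d4 (cyc_off i) (cyc_off j) <= 1)%N = (i == j) || cyc_adj4 i j.
Proof. by case: i j => [[|[|[|[|[|[|[|[|//]]]]]]]] ?] [[|[|[|[|[|[|[|[|//]]]]]]]] ?]. Qed.

Lemma adj4_cyc_off (i j : 'I_8) : adj4 (cyc_off i) (cyc_off j) = cyc_adj4 i j.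
Proof. by case: i j => [[|[|[|[|[|[|[|[|//]]]]]]]] ?] [[|[|[|[|[|[|[|[|//]]]]]]]] ?]. Qed.

Lemma adj8_cyc_off (i j : 'I_8) : adj8 (cyc_off i) (cyc_off j) = cyc_adj8 i j.
Proof. by case: i j => [[|[|[|[|[|[|[|[|//]]]]]]]] ?] [[|[|[|[|[|[|[|[|//]]]]]]]] ?]. Qed.

Lemma cyc_off_inj : injective (fun i : 'I_8 => cyc_off i).
Proof.
move=> i j eq_ij; apply: val_inj; move: i j eq_ij.
by case=> [[|[|[|[|[|[|[|[|//]]]]]]]] ?] [[|[|[|[|[|[|[|[|//]]]]]]]] ?] /eqP.
Qed.

Lemma cyc_off_surj a :
  (d8 origin a <= 1)%N -> a != origin -> exists i : 'I_8, a = cyc_off i.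
Proof.
move=> a_near a_neq0.
suff /hasP[i _ /eqP ->] : has (fun i : 'I_8 => a == cyc_off i) ord8 by exists i.
case: a a_near a_neq0 => a1 a2; rewrite /d8 /= !sub0r !abszN geq_max => /andP[].
by case: a1 => [[|[|?]]|[|?]] // _; case: a2 => [[|[|?]]|[|?]].
Qed.

Lemma cycE x (i : 'I_8) : cyc x i = shift x (cyc_off i).
Proof. by []. Qed.

Lemma cyc_inj x : injective (fun i : 'I_8 => cyc x i).
Proof. by move=> i j; rewrite !cycE => /shift_inj /cyc_off_inj. Qed.

Lemma cyc_ordS x (i : 'I_8) : cyc x (ordS i) = cyc x i.+1.
Proof. by rewrite /cyc /cyc_off /= modn_mod. Qed.

Definition N2bg_loc (c : 'I_8 -> bool) (i : 'I_8) : bool :=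
  ~~ c i && [|| odd i, ~~ c (ordS i) | ~~ c (ord_pred i)].

Lemma N2bg_locE c i :
  N2bg_loc c i = ~~ c i && [exists j : 'I_8, [&& odd j, ~~ c j & (j == i) || cyc_adj4 j i]].
Proof.
rewrite /N2bg_loc; case: (boolP (c i)) => //= bg_i; apply/idP/existsP.
  case: (boolP (odd i)) => [odd_i _ | even_i /= /orP[bg_S | bg_P]].
  - by exists i; rewrite odd_i bg_i eqxx.
  - by exists (ordS i); rewrite odd_ordS even_i bg_S /cyc_adj4 eqxx !orbT.
  - by exists (ord_pred i); rewrite odd_ord_pred even_i bg_P /cyc_adj4 ord_predK eqxx /= orbT.
case=> j /and3P[odd_j bg_j /orP[/eqP ji | /orP[/eqP Sji | /eqP Sij]]].
- by rewrite -ji odd_j.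
- by rewrite -Sji ordSK bg_j !orbT.
- by rewrite Sij bg_j /= orbT.
Qed.

Definition T4_loc (c : 'I_8 -> bool) : nat :=
  n_comp [rel i j | [&& N2bg_loc c i, N2bg_loc c j & cyc_adj4 i j]] (N2bg_loc c).

Definition T8_loc (c : 'I_8 -> bool) : nat :=
  n_comp [rel i j | [&& c i, c j & cyc_adj8 i j]] c.

Definition um_loc (c : 'I_8 -> bool) (i : 'I_8) : nat := (1 - N2bg_loc c i * (1 - c i))%N.

Definition crossing_loc (c : 'I_8 -> bool) : nat :=
  \sum_(i < 8) delta `|(Posz (um_loc c (ordS i)) - Posz (um_loc c i))%R|%N.

Section Transport.

Variables (Omega : {fset pt}) (u : pt -> bool) (x : pt) (c : 'I_8 -> bool).
Hypothesis cyc_in_Omega : forall i : 'I_8, cyc x i \in Omega.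
Hypothesis cE : forall i : 'I_8, c i = u (cyc x i).

Lemma mem_N8o z : (z \in N8o Omega x) = [exists i : 'I_8, z == cyc x i].
Proof.
rewrite !inE; apply/and3P/existsP => [[z_neq_x _ z_near] | [i /eqP ->]].
  pose a : pt := ((z.1 - x.1)%R, (z.2 - x.2)%R).
  have za : z = shift x a by rewrite /shift /= !subrKC -surjective_pairing.
  rewrite za shift_eq in z_neq_x; rewrite za d8_shiftr in z_near.
  by have [i ai] := cyc_off_surj z_near z_neq_x; exists i; rewrite za ai.
by rewrite cycE shift_eq cyc_off_neq0 cyc_in_Omega d8_shiftr d8_origin_cyc_off.
Qed.

Lemma mem_N4o_N8o z : z \in N4o Omega x -> z \in N8o Omega x.
Proof. by rewrite !inE => /and3P[-> -> /(leq_trans (d8_le_d4 _ _))]. Qed.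

Lemma cyc_in_bg (i : 'I_8) : (cyc x i \in bg Omega u) = ~~ c i.
Proof. by rewrite !inE cyc_in_Omega cE andbT. Qed.

Lemma cyc_in_fg (i : 'I_8) : (cyc x i \in fg Omega u) = c i.
Proof. by rewrite !inE cyc_in_Omega cE. Qed.

Lemma cyc_in_N4o (i : 'I_8) : (cyc x i \in N4o Omega x) = odd i.
Proof. by rewrite !inE cyc_in_Omega cycE shift_eq cyc_off_neq0 d4_shiftr d4_origin_cyc_off. Qed.

Lemma cyc_in_N4 (i j : 'I_8) : (cyc x i \in N4 Omega (cyc x j)) = (j == i) || cyc_adj4 j i.
Proof. by rewrite !inE cyc_in_Omega !cycE d4_shift d4_cyc_off. Qed.

Lemma mem_N2bg z :
  (z \in Ngeo true Omega x (bg Omega u) 2) = [exists i : 'I_8, (z == cyc x i) && N2bg_loc c i].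
Proof.
apply/bigfcupP/existsP => [[y] | [i /andP[/eqP ->]]].
  rewrite andbT /= !in_fsetI mem_N8o.
  move=> /andP[y4 y_bg] /andP[/andP[z_near /existsP[i /eqP zE]] z_bg].
  have /existsP[j /eqP yE] : [exists j : 'I_8, y == cyc x j] by rewrite -mem_N8o mem_N4o_N8o.
  exists i; rewrite zE eqxx N2bg_locE -cyc_in_bg -zE z_bg; apply/existsP; exists j.
  by rewrite -cyc_in_N4o -cyc_in_bg -cyc_in_N4 -yE -zE y4 y_bg.
rewrite N2bg_locE => /andP[bg_i /existsP[j /and3P[odd_j bg_j near_ji]]].
exists (cyc x j).
  by rewrite /Nno andbT in_fsetI cyc_in_N4o cyc_in_bg odd_j bg_j.
by rewrite /Nn !in_fsetI cyc_in_N4 near_ji mem_N8o cyc_in_bg bg_i andbT; apply/existsP; exists i.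
Qed.

Lemma mem_N1fg z :
  (z \in Ngeo false Omega x (fg Omega u) 1) = [exists i : 'I_8, (z == cyc x i) && c i].
Proof.
rewrite /Ngeo /= in_fsetI mem_N8o.
apply/andP/existsP => [[/existsP[i /eqP ->]] | [i /andP[/eqP -> ci]]].
  by rewrite cyc_in_fg => ci; exists i; rewrite eqxx.
by rewrite cyc_in_fg ci; split=> //; apply/existsP; exists i.
Qed.

Lemma T4_bgE : T4 Omega x (bg Omega u) = T4_loc c.
Proof.
apply: ncomp_inj_image (@cyc_inj x) adj4_sym mem_N2bg _ => i j.
by rewrite /= !cycE adj4_shift adj4_cyc_off.
Qed.

Lemma T8_fgE : T8 Omega x (fg Omega u) = T8_loc c.
Proof.
apply: ncomp_inj_image (@cyc_inj x) adj8_sym mem_N1fg _ => i j.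
by rewrite /= !cycE adj8_shift adj8_cyc_off.
Qed.

Lemma um_cyc (i : 'I_8) : um Omega u x (cyc x i) = um_loc c i.
Proof.
rewrite /um /mfun /um_loc mem_N2bg -cE; congr (1 - nat_of_bool _ * _)%N.
apply/existsP/idP => [[j /andP[/eqP/cyc_inj -> //]] | N2_i].
by exists i; rewrite eqxx.
Qed.

Lemma crossing_umE : crossing (um Omega u x) x = crossing_loc c.
Proof. by apply: eq_bigr => i _; rewrite -cyc_ordS !um_cyc. Qed.

End Transport.

Definition bit_colouring (v : seq bool) (i : 'I_8) : bool := nth false v i.

Fixpoint bitseqs (n : nat) : seq (seq bool) :=
  if n is n'.+1 then [seq true :: v | v <- bitseqs n'] ++ [seq false :: v | v <- bitseqs n']
  else [:: [::]].

Lemma mem_bitseqs v : v \in bitseqs (size v).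
Proof. by elim: v => [|[] v IHv] //=; rewrite mem_cat (map_f _ IHv) ?orbT. Qed.

Lemma T4_T8_crossing_loc v : size v = 8 ->
  ((T4_loc (bit_colouring v) == 1) && (T8_loc (bit_colouring v) == 1))
  = (crossing_loc (bit_colouring v) == 2).
Proof.
move=> size_v; apply/eqP.
rewrite /T4_loc /T8_loc !n_comp_dfs /crossing_loc index_enum_ord8.
have := mem_bitseqs v; rewrite size_v {size_v}; move: v; apply/allP.
(* With [card] and [bigop] unlocked and ['I_8] enumerated by [ord8], the 256
   colourings are decided by evaluation. *)
rewrite /um_loc /N2bg_loc /bit_colouring /pick /rgraph.
by rewrite !unlock /enum_mem enum_ord8; vm_compute.
Qed.

Theorem theorem2 (Omega : {fset pt}) (u : pt -> bool) (x : pt) :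
  x \in Omega ->
  (forall i : nat, (i < 8)%N -> cyc x i \in Omega) ->
  simple_point Omega u x <-> crossing (um Omega u x) x = 2%N.
Proof.
move=> _ cyc_in_Omega.
pose v := [seq u (cyc x i) | i <- iota 0 8].
have size_v : size v = 8 by rewrite size_map size_iota.
have vE (i : 'I_8) : bit_colouring v i = u (cyc x i).
  by rewrite /bit_colouring (nth_map 0) ?size_iota // nth_iota.
have cyc8_in_Omega (i : 'I_8) : cyc x i \in Omega by exact: cyc_in_Omega.
rewrite /simple_point (T4_bgE cyc8_in_Omega vE) (T8_fgE cyc8_in_Omega vE).
rewrite (crossing_umE cyc8_in_Omega vE).
have loc_iff := T4_T8_crossing_loc size_v.
split=> [[T4_1 T8_1] | /eqP]; first by apply/eqP; rewrite -loc_iff T4_1 T8_1.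
by rewrite -loc_iff => /andP[/eqP -> /eqP ->].
Qed.
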